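(* Let $\mathfrak{A}$ be a complete atomic weakly associative relation algebra with universe $A$, and let $\mathfrak{B}=\langle B,T_\kappa,E_{\kappa\lambda}\rangle_{\kappa,\lambda<3}$ be its suitable structure. Then $\mathfrak{A}\cong\mathfrak{Ra}\,\mathfrak{Cm}\,\mathfrak{B}$, via the map $\varphi:A\to\mathcal{P}(B)$ defined by $\varphi(x)=\{t\in B: t_2\le x\}$.
   Context: WA: algebras $\langle A,+,\overline{\phantom{x}},;,\breve{\phantom{x}},1'\rangle$ with $x\cdot y=\overline{\overline{x}+\overline{y}}$, $0'=\overline{1'}$, $1=1'+0'$, $0=\overline{1}$, satisfying for all $x,y,z$: $x+y=y+x$; $x+(y+z)=(x+y)+z$; $\overline{\overline{x}+\overline{y}}+\overline{\overline{x}+y}=x$; $((x\cdot 1');1);1=(x\cdot1');1$; $(x+y);z=x;z+y;z$; $x;1'=x$; $\breve{\breve{x}}=x$; $\breve{(x+y)}=\breve{x}+\breve{y}$; $\breve{(x;y)}=\breve{y};\breve{x}$; $\breve{x};\overline{x;y}+\overline{y}=\overline{y}$. Complete/atomic refer to the Boolean reduct; $\mathrm{At}(\mathfrak{A})$ = atoms. Suitable structure: $B=\{s\in{}^3\mathrm{At}(\mathfrak{A}): s_2;s_0\ge s_1\}$; $T_\kappa=\{\langle s,t\rangle\in B\times B:s_\kappa=t_\kappa\}$; $E_{\kappa\kappa}=B$; for distinct $\kappa,\lambda$ with third index $\mu$, $E_{\kappa\lambda}=\{s\in B:s_\mu\le1'\}$. Complex algebra $\mathfrak{Cm}\,\mathfrak{B}=\langle\mathcal{P}(B),\cup,\cap,B\setminus\cdot,\emptyset,B,T_\kappa^*,E_{\kappa\lambda}\rangle_{\kappa,\lambda<3}$,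 with $T_\kappa^*(X)=\{y\in B:\exists x\in X\ \langle y,x\rangle\in T_\kappa\}$ as cylindrification $c_\kappa$ and $E_{\kappa\lambda}$ as diagonal $d_{\kappa\lambda}$. Relation-algebraic reduct: for an algebra $\mathfrak{C}=\langle C,+,\overline{\phantom{x}},c_\kappa,d_{\kappa\lambda}\rangle_{\kappa,\lambda<3}$, let $Nr_2\mathfrak{C}=\{x\in C:c_2x=x\}$, $x;y=c_2(c_1(d_{12}\cdot x)\cdot c_0(d_{02}\cdot y))$, $\breve{x}=c_2(d_{20}\cdot c_0(d_{01}\cdot c_1(d_{12}\cdot x)))$, and $\mathfrak{Ra}\,\mathfrak{C}=\langle Nr_2\mathfrak{C},+,\overline{\phantom{x}},;,\breve{\phantom{x}},d_{01}\rangle$. *)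

Set Implicit Arguments.

Record ra_sig := RaSig {
  car :> Type;
  rplus : car -> car -> car;
  rcompl : car -> car;
  rcomp : car -> car -> car;
  rconv : car -> car;
  rid : car
}.

Section Derived.
Variable A : ra_sig.
Definition rmeet (x y : A) : A := rcompl A (rplus A (rcompl A x) (rcompl A y)).
Definition rdiv : A := rcompl A (rid A).
Definition rtop : A := rplus A (rid A) rdiv.
Definition rbot : A := rcompl A rtop.
Definition rle (x y : A) : Prop := rplus A x y = y.
Definition is_atom (a : A) : Prop :=
  a <> rbot /\ forall y, rle y a -> y = rbot \/ y = a.
Definition is_lub (S : A -> Prop) (u : A) : Prop :=
  (forall x, S x -> rle x u) /\ (forall v, (forall x, S x -> rle x v) -> rle u v).
Definition complete : Prop := forall S : A -> Prop, exists u, is_lub S u.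
Definition atomic : Prop :=
  forall x : A, x <> rbot -> exists a, is_atom a /\ rle a x.
End Derived.

Definition is_WA (A : ra_sig) : Prop :=
  let p := rplus A in let c := rcompl A in let m := rcomp A in
  let v := rconv A in let e := rid A in
  (forall x y, p x y = p y x) /\
  (forall x y z, p x (p y z) = p (p x y) z) /\
  (forall x y, p (c (p (c x) (c y))) (c (p (c x) y)) = x) /\
  (forall x, m (m (rmeet A x e) (rtop A)) (rtop A) = m (rmeet A x e) (rtop A)) /\
  (forall x y z, m (p x y) z = p (m x z) (m y z)) /\
  (forall x, m x e = x) /\
  (forall x, v (v x) = x) /\
  (forall x y, v (p x y) = p (v x) (v y)) /\
  (forall x y, v (m x y) = m (v y) (v x)) /\
  (forall x y, p (m (v x) (c (m x y))) (c y) = c y).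

Inductive I3 := I0 | I1 | I2.

Definition third (k l : I3) : I3 :=
  match k, l with
  | I0, I1 | I1, I0 => I2
  | I0, I2 | I2, I0 => I1
  | _, _ => I0
  end.

Record suitable (A : ra_sig) := Suit {
  tr : I3 -> A;
  tr_atom : forall k, is_atom A (tr k);
  tr_cond : rle A (tr I1) (rcomp A (tr I2) (tr I0))
}.

Section Complex.
Variable A : ra_sig.
Notation B := (suitable A).
Definition cset := B -> Prop.
Definition cunion (X Y : cset) : cset := fun s => X s \/ Y s.
Definition cinter (X Y : cset) : cset := fun s => X s /\ Y s.
Definition ccompl (X : cset) : cset := fun s => ~ X s.
(* cylindrification c_k = T_k^* *)
Definition cyl (k : I3) (X : cset) : cset :=
  fun y => exists x, X x /\ tr y k = tr x k.
Definition diag (k l : I3) : cset :=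
  if (match k, l with I0, I0 | I1, I1 | I2, I2 => true | _, _ => false end)
  then fun _ => True
  else fun s => rle A (tr s (third k l)) (rid A).
Definition in_Nr2 (X : cset) : Prop := cyl I2 X = X.
Definition ccomp (X Y : cset) : cset :=
  cyl I2 (cinter (cyl I1 (cinter (diag I1 I2) X)) (cyl I0 (cinter (diag I0 I2) Y))).
Definition cconv (X : cset) : cset :=
  cyl I2 (cinter (diag I2 I0) (cyl I0 (cinter (diag I0 I1) (cyl I1 (cinter (diag I1 I2) X))))).
Definition cid : cset := diag I0 I1.

Definition phi (x : A) : cset := fun t => rle A (tr t I2) x.

Definition is_iso_onto_RaCm (f : A -> cset) : Prop :=
  (forall x, in_Nr2 (f x)) /\
  (forall x y, f x = f y -> x = y) /\
  (forall X, in_Nr2 X -> exists x, f x = X) /\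
  (forall x y, f (rplus A x y) = cunion (f x) (f y)) /\
  (forall x, f (rcompl A x) = ccompl (f x)) /\
  (forall x y, f (rcomp A x y) = ccomp (f x) (f y)) /\
  (forall x, f (rconv A x) = cconv (f x)) /\
  f (rid A) = cid.
End Complex.

From Stdlib Require Import Classical FunctionalExtensionality PropExtensionality.

(* The Boolean reduct of a WA is a Boolean algebra by Huntington's theorem, and the
   last WA axiom x˘;-(x;y) <= -y yields the cycle law: (x;y)·z, (x˘;z)·y and (z;y˘)·x
   vanish together. On atoms the cycle law rotates triangles (t <= a;b implies
   a <= t;b˘ and b <= a˘;t), and every atom below x;y lies below a;b for atoms a <= x,
   b <= y. With the identity atoms e <= 1' satisfying a <= a;e or a <= e;a, this
   provides exactly the triangles of B that witness membership in the cylindric terms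
   defining ;, ˘ and 1' in Ra Cm B. An element of Nr_2 Cm B is a set of triangles
   determined by their 2-coordinate, so by completeness it is the image of the join of
   these coordinates, and atomicity makes phi injective. *)

Declare Scope ra_scope.

Section WeaklyAssociative.
Variable A : ra_sig.

Local Notation "x + y" := (rplus A x y) : ra_scope.
Local Notation "- x" := (rcompl A x) : ra_scope.
Local Notation "x * y" := (rmeet A x y) : ra_scope.
Local Notation "x ⨾ y" := (rcomp A x y) (at level 40, left associativity) : ra_scope.
Local Notation "x ˘" := (rconv A x) (at level 2, left associativity, format "x ˘") : ra_scope.
Local Notation "x <= y" := (rle A x y) : ra_scope.
Local Notation "0" := (rbot A) : ra_scope.
Local Notation "1" := (rtop A) : ra_scope.
Local Notation "1'" := (rid A) : ra_scope.
Local Notation atom := (is_atom A).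
Local Open Scope ra_scope.

Section BooleanReduct.
Hypothesis join_comm : forall x y : A, x + y = y + x.
Hypothesis join_assoc : forall x y z : A, x + (y + z) = x + y + z.
Hypothesis huntington : forall x y : A, -(-x + -y) + -(-x + y) = x.

Lemma join_left_comm x y z : x + (y + z) = y + (x + z).
Proof. rewrite !join_assoc, (join_comm x y). reflexivity. Qed.

Lemma compl_involutive x : --x = x.
Proof.
  assert (swap : forall x y, x + -(-y + --x) = y + -(-x + y)).
  { intros u v. transitivity (-(-u + v) + (-(-v + -u) + -(-v + --u))).
    - rewrite (join_comm (-v) (-u)), join_left_comm, join_assoc, huntington.
      reflexivity.
    - rewrite (join_comm (-(-v + -u))), huntington. apply join_comm. }
  assert (absorb : forall x y, x + -(-x + --y) = x + -(-x + y)).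
  { intros u v. transitivity (-(-u + v) + (-(-u + --v) + -(-u + -v))).
    - rewrite (join_comm (-(-u + --v))), join_left_comm, join_assoc, huntington.
      reflexivity.
    - rewrite huntington. apply join_comm. }
  assert (join_expand : forall x y, -(-x + y) + (y + -(-y + -x)) = x + y).
  { intros u v. rewrite <- (absorb v (-u)), join_assoc, (join_comm (-(-u + v)) v),
      <- swap, <- join_assoc, (join_comm (-(-v + --u))), huntington.
    reflexivity. }
  assert (top_swap : forall x, -x + --x = x + -x).
  { assert (top_expand : forall x, -x + x = -(--x + x) + (x + -(-x + x))).
    { intros u. rewrite <- swap. symmetry. apply join_expand. }
    intros u. rewrite join_comm, top_expand, (join_comm (---u) (-u)),
      (join_comm (--u) (-u)), join_left_comm, huntington.
    apply join_comm. }
  assert (compl_expand : forall x, -x = -(x + -x) + -(x + --x)).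
  { intros u. rewrite <- top_swap, (join_comm u (--u)), (join_comm (-u) (--u)).
    symmetry. apply huntington. }
  rewrite (compl_expand (-x)), join_comm. apply huntington.
Qed.

Lemma meet_comm x y : x * y = y * x.
Proof. unfold rmeet. rewrite join_comm. reflexivity. Qed.

Lemma meet_split x y : x * y + x * -y = x.
Proof. unfold rmeet. rewrite (compl_involutive y). apply huntington. Qed.

Lemma compl_join x y : -(x + y) = -x * -y.
Proof. unfold rmeet. rewrite !compl_involutive. reflexivity. Qed.

(* Splitting both sides along [x] and [y] gives the same four meets. *)
Lemma join_compl_top x : x + -x = 1.
Proof.
  assert (const : forall y, x + -x = y + -y).
  { intros y. transitivity ((x * y + x * -y) + (-x * y + -x * -y)).
    { rewrite !meet_split. reflexivity. }
    transitivity ((y * x + y * -x) + (-y * x + -y * -x)).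
    2: { rewrite !meet_split. reflexivity. }
    rewrite (meet_comm y x), (meet_comm y (-x)), (meet_comm (-y) x),
      (meet_comm (-y) (-x)), <- !join_assoc, (join_left_comm (x * -y)).
    reflexivity. }
  apply const.
Qed.

Lemma meet_compl x : x * -x = 0.
Proof. unfold rmeet. rewrite compl_involutive, join_comm, join_compl_top. reflexivity. Qed.

Lemma meet_self_join_bot x : x * x + 0 = x.
Proof. rewrite <- (meet_compl x). apply meet_split. Qed.

Lemma join_top x : x + 1 = 1.
Proof.
  assert (compl_double : -(x + x) + 0 = -x)
    by (rewrite compl_join; apply meet_self_join_bot).
  transitivity (x + x + -(x + x) + 0).
  - rewrite <- join_assoc, compl_double, <- join_assoc, join_compl_top. reflexivity.
  - rewrite join_compl_top. exact (join_compl_top 1).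
Qed.

Lemma join_bot x : x + 0 = x.
Proof.
  assert (bot_bot : 0 + 0 = 0).
  { assert (meet_bot : 0 * 0 = 0).
    { unfold rmeet, rbot. rewrite compl_involutive, join_top. reflexivity. }
    transitivity (0 * 0 + 0).
    - rewrite meet_bot. reflexivity.
    - apply meet_self_join_bot. }
  transitivity (x * x + 0 + 0).
  - rewrite meet_self_join_bot. reflexivity.
  - rewrite <- join_assoc, bot_bot. apply meet_self_join_bot.
Qed.

Lemma meet_idem x : x * x = x.
Proof. rewrite <- (join_bot (x * x)). apply meet_self_join_bot. Qed.

Lemma join_idem x : x + x = x.
Proof.
  rewrite <- (compl_involutive (x + x)), compl_join, meet_idem.
  apply compl_involutive.
Qed.

Lemma le_refl x : x <= x.
Proof. apply join_idem. Qed.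

Lemma le_trans x y z : x <= y -> y <= z -> x <= z.
Proof. unfold rle. intros Hxy Hyz. rewrite <- Hyz, join_assoc, Hxy. reflexivity. Qed.

Lemma le_antisym x y : x <= y -> y <= x -> x = y.
Proof. unfold rle. intros Hxy Hyx. rewrite <- Hyx, join_comm. exact Hxy. Qed.

Lemma le_join_l x y : x <= x + y.
Proof. unfold rle. rewrite join_assoc, join_idem. reflexivity. Qed.

Lemma le_join_r x y : y <= x + y.
Proof. rewrite join_comm. apply le_join_l. Qed.

Lemma join_le x y z : x <= z -> y <= z -> x + y <= z.
Proof. unfold rle. intros Hx Hy. rewrite <- join_assoc, Hy, Hx. reflexivity. Qed.

Lemma meet_le_l x y : x * y <= x.
Proof. pose proof (le_join_l (x * y) (x * -y)) as H. rewrite meet_split in H. exact H. Qed.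

Lemma meet_le_r x y : x * y <= y.
Proof. rewrite meet_comm. apply meet_le_l. Qed.

Lemma compl_le_compl x y : x <= y -> -y <= -x.
Proof. unfold rle. intros H. rewrite <- H, compl_join. apply meet_le_l. Qed.

Lemma le_meet x y z : z <= x -> z <= y -> z <= x * y.
Proof.
  intros Hx Hy. unfold rmeet. rewrite <- (compl_involutive z).
  apply compl_le_compl, join_le; apply compl_le_compl; assumption.
Qed.

Lemma bot_le x : 0 <= x.
Proof. unfold rle. rewrite join_comm. apply join_bot. Qed.

Lemma le_top x : x <= 1.
Proof. apply join_top. Qed.

Lemma le_bot x : x <= 0 -> x = 0.
Proof. intros H. apply le_antisym; [exact H | apply bot_le]. Qed.

Lemma meet_compl_le x y : x * -y = 0 -> x <= y.
Proof.
  intros H. pose proof (meet_split x y) as E. rewrite H, join_bot in E.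
  rewrite <- E. apply meet_le_r.
Qed.

Lemma le_compl_bot x z : z <= x -> z <= -x -> z = 0.
Proof. intros Hx Hnx. apply le_bot. rewrite <- (meet_compl x). apply le_meet; assumption. Qed.

Lemma meet_le_eq x y : x <= y -> y * x = x.
Proof.
  intros H. apply le_antisym; [apply meet_le_r | apply le_meet; [exact H | apply le_refl]].
Qed.

Lemma compl_unique x y : x + y = 1 -> x * y = 0 -> y = -x.
Proof.
  intros Hjoin Hmeet. apply le_antisym.
  - apply meet_compl_le. rewrite compl_involutive, meet_comm. exact Hmeet.
  - apply meet_compl_le. rewrite <- compl_join, Hjoin. reflexivity.
Qed.

Lemma atom_neq_bot a : atom a -> a <> 0.
Proof. intros [H _]. exact H. Qed.

Lemma atom_le_or_le_compl a x : atom a -> a <= x \/ a <= -x.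
Proof.
  intros [_ Ha]. destruct (Ha (a * x) (meet_le_l a x)) as [E | E].
  - right. apply meet_compl_le. rewrite compl_involutive. exact E.
  - left. rewrite <- E. apply meet_le_r.
Qed.

Lemma atom_le_compl a x : atom a -> (a <= -x <-> ~ a <= x).
Proof.
  intros Ha. split.
  - intros Hnx Hx. exact (atom_neq_bot a Ha (le_compl_bot x a Hx Hnx)).
  - intros Hx. destruct (atom_le_or_le_compl a x Ha); tauto.
Qed.

Lemma atom_le_join a x y : atom a -> a <= x + y -> a <= x \/ a <= y.
Proof.
  intros Ha H. destruct (atom_le_or_le_compl a x Ha) as [Hx | Hx]; [now left |].
  destruct (atom_le_or_le_compl a y Ha) as [Hy | Hy]; [now right |].
  exfalso. apply (atom_le_compl a (x + y) Ha); [| exact H].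
  rewrite compl_join. apply le_meet; assumption.
Qed.

Lemma atom_le_eq a b : atom a -> atom b -> a <= b -> a = b.
Proof.
  intros Ha [_ Hb] H. destruct (Hb a H) as [E | E]; [| exact E].
  exfalso. exact (atom_neq_bot a Ha E).
Qed.

Lemma atom_le_iff_meet_neq_bot a x : atom a -> (a <= x <-> x * a <> 0).
Proof.
  intros Ha. split.
  - intros H. rewrite (meet_le_eq a x H). exact (atom_neq_bot a Ha).
  - intros H. destruct Ha as [_ Ha].
    destruct (Ha (x * a) (meet_le_r x a)) as [E | E]; [contradiction |].
    rewrite <- E. apply meet_le_l.
Qed.

Section CompositionConverse.
Hypothesis comp_join_l : forall x y z : A, (x + y) ⨾ z = x ⨾ z + y ⨾ z.
Hypothesis comp_id_r : forall x : A, x ⨾ 1' = x.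
Hypothesis conv_involutive : forall x : A, x˘˘ = x.
Hypothesis conv_join : forall x y : A, (x + y)˘ = x˘ + y˘.
Hypothesis conv_comp : forall x y : A, (x ⨾ y)˘ = y˘ ⨾ x˘.
Hypothesis conv_comp_compl_le : forall x y : A, x˘ ⨾ -(x ⨾ y) <= -y.

Lemma conv_inj x y : x˘ = y˘ -> x = y.
Proof. intros H. rewrite <- (conv_involutive x), H. apply conv_involutive. Qed.

Lemma conv_le_conv x y : x <= y -> x˘ <= y˘.
Proof. unfold rle. intros H. rewrite <- conv_join, H. reflexivity. Qed.

Lemma conv_le x y : x˘ <= y <-> x <= y˘.
Proof.
  split; intros H; apply conv_le_conv in H; rewrite conv_involutive in H; exact H.
Qed.

Lemma comp_le_l x y z : x <= y -> x ⨾ z <= y ⨾ z.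
Proof. unfold rle. intros H. rewrite <- comp_join_l, H. reflexivity. Qed.

Lemma comp_join_r x y z : x ⨾ (y + z) = x ⨾ y + x ⨾ z.
Proof. apply conv_inj. rewrite conv_comp, conv_join, comp_join_l, conv_join, !conv_comp. reflexivity. Qed.

Lemma comp_le_r x y z : y <= z -> x ⨾ y <= x ⨾ z.
Proof. unfold rle. intros H. rewrite <- comp_join_r, H. reflexivity. Qed.

Lemma conv_id : 1'˘ = 1'.
Proof.
  assert (E : (1'˘ ⨾ 1')˘ = 1'˘ ⨾ 1') by (rewrite conv_comp, conv_involutive; reflexivity).
  rewrite comp_id_r, conv_involutive in E. symmetry. exact E.
Qed.

Lemma comp_id_l x : 1' ⨾ x = x.
Proof. apply conv_inj. rewrite conv_comp, conv_id. apply comp_id_r. Qed.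

Lemma conv_bot : 0˘ = 0.
Proof. apply le_bot, conv_le, bot_le. Qed.

Lemma conv_top : 1˘ = 1.
Proof. apply le_antisym; [apply le_top | apply conv_le, le_top]. Qed.

Lemma conv_compl x : (-x)˘ = -x˘.
Proof.
  apply compl_unique.
  - rewrite <- conv_join, join_compl_top. apply conv_top.
  - apply conv_inj. rewrite conv_bot. apply (le_compl_bot x).
    + apply conv_le, meet_le_l.
    + apply conv_le, meet_le_r.
Qed.

Lemma conv_meet x y : (x * y)˘ = x˘ * y˘.
Proof. unfold rmeet. rewrite conv_compl, conv_join, !conv_compl. reflexivity. Qed.

Lemma comp_meet_bot_conv_l x y z : (x ⨾ y) * z = 0 -> (x˘ ⨾ z) * y = 0.
Proof.
  intros H. apply (le_compl_bot y); [apply meet_le_r |].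
  assert (Hz : z <= -(x ⨾ y)).
  { apply meet_compl_le. rewrite compl_involutive, meet_comm. exact H. }
  eapply le_trans; [apply meet_le_l |].
  eapply le_trans; [apply comp_le_r, Hz | apply conv_comp_compl_le].
Qed.

Lemma comp_meet_bot_conv_r x y z : (x ⨾ y) * z = 0 -> (z ⨾ y˘) * x = 0.
Proof.
  intros H. apply conv_inj.
  rewrite conv_bot, conv_meet, conv_comp, conv_involutive, <- (conv_involutive y).
  apply comp_meet_bot_conv_l.
  rewrite <- conv_comp, <- conv_meet, H. apply conv_bot.
Qed.

Lemma comp_meet_conv_l x y z : (x ⨾ y) * z <> 0 <-> (x˘ ⨾ z) * y <> 0.
Proof.
  split; intros H E; apply H.
  - apply comp_meet_bot_conv_l in E. rewrite conv_involutive in E. exact E.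
  - apply comp_meet_bot_conv_l. exact E.
Qed.

Lemma comp_meet_conv_r x y z : (x ⨾ y) * z <> 0 <-> (z ⨾ y˘) * x <> 0.
Proof.
  split; intros H E; apply H.
  - apply comp_meet_bot_conv_r in E. rewrite conv_involutive in E. exact E.
  - apply comp_meet_bot_conv_r. exact E.
Qed.

Lemma atom_conv a : atom a -> atom a˘.
Proof.
  intros [Hbot Ha]. split.
  - intros E. apply Hbot, conv_inj. rewrite E. symmetry. apply conv_bot.
  - intros y Hy. apply conv_le in Hy. destruct (Ha (y˘) Hy) as [E | E].
    + left. apply conv_inj. rewrite E. symmetry. apply conv_bot.
    + right. rewrite <- E. symmetry. apply conv_involutive.
Qed.

Lemma atom_comp_rotate_r a b c : atom a -> atom c -> c <= a ⨾ b -> a <= c ⨾ b˘.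
Proof.
  intros Ha Hc H. apply (atom_le_iff_meet_neq_bot a _ Ha), (comp_meet_conv_r a b c).
  apply (atom_le_iff_meet_neq_bot c _ Hc). exact H.
Qed.

Lemma atom_comp_rotate_l a b c : atom b -> atom c -> c <= a ⨾ b -> b <= a˘ ⨾ c.
Proof.
  intros Hb Hc H. apply (atom_le_iff_meet_neq_bot b _ Hb), (comp_meet_conv_l a b c).
  apply (atom_le_iff_meet_neq_bot c _ Hc). exact H.
Qed.

Lemma comp_le_id_r a b c : c <= a ⨾ b -> b <= 1' -> c <= a.
Proof.
  intros H Hb. rewrite <- (comp_id_r a). exact (le_trans _ _ _ H (comp_le_r a b 1' Hb)).
Qed.

Lemma comp_le_id_l a b c : c <= a ⨾ b -> a <= 1' -> c <= b.
Proof.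
  intros H Ha. rewrite <- (comp_id_l b). exact (le_trans _ _ _ H (comp_le_l a 1' b Ha)).
Qed.

Lemma atom_comp_id_le_conv_r a b c : atom a -> atom c -> c <= a ⨾ b -> c <= 1' -> a <= b˘.
Proof.
  intros Ha Hc H Hid. exact (comp_le_id_l _ _ _ (atom_comp_rotate_r a b c Ha Hc H) Hid).
Qed.

Lemma atom_comp_id_le_conv_l a b c : atom b -> atom c -> c <= a ⨾ b -> c <= 1' -> b <= a˘.
Proof.
  intros Hb Hc H Hid. exact (comp_le_id_r _ _ _ (atom_comp_rotate_l a b c Hb Hc H) Hid).
Qed.

Section Atomic.
Hypothesis atomic_A : atomic A.

Lemma meet_neq_bot_atom x y : x * y <> 0 -> exists a, atom a /\ a <= x /\ a <= y.
Proof.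
  intros H. destruct (atomic_A (x * y) H) as [a [Ha Hle]].
  exists a. split; [exact Ha |].
  split; eapply le_trans; [exact Hle | apply meet_le_l | exact Hle | apply meet_le_r].
Qed.

Lemma le_of_atoms x y : (forall a, atom a -> a <= x -> a <= y) -> x <= y.
Proof.
  intros H. destruct (classic (x * -y = 0)) as [E | E]; [now apply meet_compl_le |].
  destruct (meet_neq_bot_atom x (-y) E) as [a [Ha [Hx Hy]]].
  exfalso. apply (proj1 (atom_le_compl a y Ha) Hy), H; assumption.
Qed.


Lemma atom_id_r a : atom a -> exists e, atom e /\ e <= 1' /\ a <= a ⨾ e.
Proof.
  intros Ha.
  assert (H : (a˘ ⨾ a) * 1' <> 0).
  { apply (comp_meet_conv_l a 1' a). rewrite comp_id_r, meet_idem. exact (atom_neq_bot a Ha). }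
  destruct (meet_neq_bot_atom _ _ H) as [e [He [He_comp He_id]]].
  exists e. split; [exact He | split; [exact He_id |]].
  pose proof (atom_comp_rotate_l _ _ _ Ha He He_comp) as R.
  rewrite conv_involutive in R. exact R.
Qed.

Lemma atom_id_l a : atom a -> exists e, atom e /\ e <= 1' /\ a <= e ⨾ a.
Proof.
  intros Ha.
  assert (H : (a ⨾ a˘) * 1' <> 0).
  { apply (comp_meet_conv_r 1' a a). rewrite comp_id_l, meet_idem. exact (atom_neq_bot a Ha). }
  destruct (meet_neq_bot_atom _ _ H) as [e [He [He_comp He_id]]].
  exists e. split; [exact He | split; [exact He_id |]].
  pose proof (atom_comp_rotate_r _ _ _ Ha He He_comp) as R.
  rewrite conv_involutive in R. exact R.
Qed.

Lemma atom_comp_split t x y : atom t -> t <= x ⨾ y ->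
  exists a b, atom a /\ atom b /\ a <= x /\ b <= y /\ t <= a ⨾ b.
Proof.
  intros Ht H.
  apply (atom_le_iff_meet_neq_bot t _ Ht), (comp_meet_conv_l x y t) in H.
  destruct (meet_neq_bot_atom _ _ H) as [b [Hb [Hb_comp Hby]]].
  assert (Hxb : (t ⨾ b˘) * x <> 0).
  { apply (comp_meet_conv_r x b t), (comp_meet_conv_l x b t).
    apply (atom_le_iff_meet_neq_bot b _ Hb). exact Hb_comp. }
  destruct (meet_neq_bot_atom _ _ Hxb) as [a [Ha [Ha_comp Hax]]].
  exists a, b. do 4 (split; [assumption |]).
  apply (atom_le_iff_meet_neq_bot t _ Ht), (comp_meet_conv_r a b t).
  apply (atom_le_iff_meet_neq_bot a _ Ha). exact Ha_comp.
Qed.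

Section Representation.
Hypothesis complete_A : complete A.

Definition triangle {a0 a1 a2 : A} (h0 : atom a0) (h1 : atom a1) (h2 : atom a2)
  (h : a1 <= a2 ⨾ a0) : suitable A :=
  Suit (fun k => match k with I0 => a0 | I1 => a1 | I2 => a2 end)
    (fun k => match k return atom (match k with I0 => a0 | I1 => a1 | I2 => a2 end) with
              | I0 => h0 | I1 => h1 | I2 => h2 end)
    h.

Lemma cset_ext (X Y : cset A) : (forall s, X s <-> Y s) -> X = Y.
Proof.
  intros H. apply functional_extensionality. intros s.
  apply propositional_extensionality, H.
Qed.

Lemma phi_in_Nr2 (x : A) : in_Nr2 (phi x).
Proof.
  apply cset_ext. intros t. split.
  - intros [s [Hs E]]. unfold phi. rewrite E. exact Hs.
  - intros Ht. exists t. split; [exact Ht | reflexivity].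
Qed.

Lemma phi_injective (x y : A) : phi x = phi y -> x = y.
Proof.
  assert (phi_le : forall x y, phi x = phi y -> x <= y).
  { intros u v E. apply le_of_atoms. intros a Ha Hau.
    destruct (atom_id_r a Ha) as [e [He [_ Hae]]].
    pose proof (f_equal (fun X => X (triangle He Ha Ha Hae)) E) as F.
    unfold phi in F. simpl in F. rewrite <- F. exact Hau. }
  intros E. apply le_antisym; apply phi_le; [exact E | symmetry; exact E].
Qed.

Lemma phi_onto_Nr2 (X : cset A) : in_Nr2 X -> exists x, phi x = X.
Proof.
  intros HX. destruct (complete_A (fun a => exists s, X s /\ tr s I2 = a)) as [u [Hub Hlub]].
  exists u. apply cset_ext. intros t. unfold phi. split.
  - intros Ht. destruct (classic (exists s, X s /\ tr s I2 = tr t I2)) as [[s [Xs Es]] | Hno].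
    + rewrite <- HX. exists s. split; [exact Xs | symmetry; exact Es].
    + assert (Hu : u <= -tr t I2).
      { apply Hlub. intros a [s [Xs <-]]. apply (atom_le_compl _ _ (tr_atom s I2)).
        intros Hst. apply Hno. exists s. split; [exact Xs |].
        apply atom_le_eq; [apply tr_atom | apply tr_atom | exact Hst]. }
      exfalso. apply (atom_neq_bot _ (tr_atom t I2)), (le_compl_bot (tr t I2)).
      * apply le_refl.
      * exact (le_trans _ _ _ Ht Hu).
  - intros Xt. apply Hub. exists t. split; [exact Xt | reflexivity].
Qed.

Lemma phi_join (x y : A) : phi (x + y) = cunion (phi x) (phi y).
Proof.
  apply cset_ext. intros t. unfold phi, cunion. split.
  - apply atom_le_join, tr_atom.
  - intros [H | H]; eapply le_trans; [exact H | apply le_join_l | exact H | apply le_join_r].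
Qed.

Lemma phi_compl (x : A) : phi (-x) = ccompl (phi x).
Proof. apply cset_ext. intros t. apply atom_le_compl, tr_atom. Qed.

Lemma phi_comp_sub (x y : A) t : phi (x ⨾ y) t -> ccomp (phi x) (phi y) t.
Proof.
  unfold phi, ccomp, cyl, cinter, diag. simpl. intros H.
  destruct (atom_comp_split _ x y (tr_atom t I2) H) as [a [b [Ha [Hb [Hax [Hby Hab]]]]]].
  destruct (atom_id_r a Ha) as [e [He [He_id Hae]]].
  destruct (atom_id_l b Hb) as [g [Hg [Hg_id Hgb]]].
  exists (triangle (atom_conv b Hb) Ha (tr_atom t I2)
            (atom_comp_rotate_r _ _ _ Ha (tr_atom t I2) Hab)).
  simpl. split; [split | reflexivity].
  - exists (triangle He Ha Ha Hae). simpl. auto.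
  - exists (triangle (atom_conv b Hb) Hg Hb (atom_comp_rotate_r _ _ _ Hg Hb Hgb)).
    simpl. auto.
Qed.

Lemma ccomp_phi_sub (x y : A) t : ccomp (phi x) (phi y) t -> phi (x ⨾ y) t.
Proof.
  unfold phi, ccomp, cyl, cinter, diag. simpl.
  intros [s [[[p [[Hp0 Hpx] Hsp]] [q [[Hq1 Hqy] Hsq]]] Hts]].
  rewrite Hts.
  assert (Hs1 : tr s I1 <= x).
  { rewrite Hsp. exact (le_trans _ _ _ (comp_le_id_r _ _ _ (tr_cond p) Hp0) Hpx). }
  assert (Hs0 : (tr s I0)˘ <= y).
  { apply conv_le. rewrite Hsq.
    apply (le_trans _ _ _ (atom_comp_id_le_conv_l _ _ _ (tr_atom q I0) (tr_atom q I1) (tr_cond q) Hq1)).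
    apply conv_le_conv, Hqy. }
  apply (le_trans _ _ _ (atom_comp_rotate_r _ _ _ (tr_atom s I2) (tr_atom s I1) (tr_cond s))).
  apply (le_trans _ (x ⨾ (tr s I0)˘)); [apply comp_le_l, Hs1 | apply comp_le_r, Hs0].
Qed.

Lemma phi_comp (x y : A) : phi (x ⨾ y) = ccomp (phi x) (phi y).
Proof. apply cset_ext. intros t. split; [apply phi_comp_sub | apply ccomp_phi_sub]. Qed.

Lemma phi_conv_sub (x : A) t : phi x˘ t -> cconv (phi x) t.
Proof.
  unfold phi, cconv, cyl, cinter, diag. simpl. intros H.
  pose proof (tr_atom t I2) as Ha. pose proof (atom_conv _ Ha) as Ha'.
  apply conv_le in H.
  destruct (atom_id_l _ Ha) as [g [Hg [Hg_id Hga]]].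
  destruct (atom_id_l _ Ha') as [g' [Hg' [Hg'_id Hga']]].
  destruct (atom_id_r _ Ha') as [e [He [He_id Hae]]].
  exists (triangle Ha' Hg Ha (atom_comp_rotate_r _ _ _ Hg Ha Hga)).
  simpl. split; [split; [exact Hg_id |] | reflexivity].
  exists (triangle Ha' Ha' Hg' Hga'). simpl. split; [split; [exact Hg'_id |] | reflexivity].
  exists (triangle He Ha' Ha' Hae). simpl. auto.
Qed.

Lemma cconv_phi_sub (x : A) t : cconv (phi x) t -> phi x˘ t.
Proof.
  unfold phi, cconv, cyl, cinter, diag. simpl.
  intros [s [[Hs1 [r [[Hr2 [p [[Hp0 Hpx] Hrp]]] Hsr]]] Hts]].
  rewrite Hts.
  assert (Hr1 : tr r I1 <= x).
  { rewrite Hrp. exact (le_trans _ _ _ (comp_le_id_r _ _ _ (tr_cond p) Hp0) Hpx). }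
  assert (Hr10 : tr r I1 = tr r I0).
  { apply atom_le_eq; [apply tr_atom | apply tr_atom |].
    exact (comp_le_id_l _ _ _ (tr_cond r) Hr2). }
  apply (le_trans _ _ _ (atom_comp_id_le_conv_r _ _ _ (tr_atom s I2) (tr_atom s I1) (tr_cond s) Hs1)).
  apply conv_le_conv. rewrite Hsr, <- Hr10. exact Hr1.
Qed.

Lemma phi_conv (x : A) : phi x˘ = cconv (phi x).
Proof. apply cset_ext. intros t. split; [apply phi_conv_sub | apply cconv_phi_sub]. Qed.

End Representation.
End Atomic.
End CompositionConverse.
End BooleanReduct.
End WeaklyAssociative.

Theorem theorem5 (A : ra_sig) (HWA : is_WA A) (Hc : complete A) (Ha : atomic A) :
  is_iso_onto_RaCm (@phi A).
Proof.
  (* The axiom ((x·1');1);1 = (x·1'). *)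
  destruct HWA as (join_comm & join_assoc & huntington & _ & comp_join_l & comp_id_r &
                   conv_involutive & conv_join & conv_comp & conv_comp_compl_le).
  split. { apply phi_in_Nr2. }
  split. { intros x y. apply phi_injective; assumption. }
  split. { intros X. apply phi_onto_Nr2; assumption. }
  split. { intros x y. apply phi_join; assumption. }
  split. { intros x. apply phi_compl; assumption. }
  split. { intros x y. apply phi_comp; assumption. }
  split. { intros x. apply phi_conv; assumption. }
  reflexivity.
Qed.
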